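(* Let $C$ be an $E$-linear code of length $2n$. Then (1) $(LSHull(C))_{Res}=C_{Res}\cap (C_{Res})^{\perp_S}$ and $(LSHull(C))_{Tor}=(C_{Res})^{\perp_S}\cap C_{Tor}$; (2) $(RSHull(C))_{Res}=C_{Res}\cap (C_{Tor})^{\perp_S}$ and $(RSHull(C))_{Tor}=C_{Tor}$; (3) $(SHull(C))_{Res}=C_{Res}\cap (C_{Tor})^{\perp_S}$ and $(SHull(C))_{Tor}=(C_{Res})^{\perp_S}\cap C_{Tor}$.
   Context: $E=\langle \kappa,\tau \mid 2\kappa=2\tau=0,\ \kappa^2=\kappa,\ \tau^2=\tau,\ \kappa\tau=\kappa,\ \tau\kappa=\tau\rangle$ is the non-unital noncommutative ring with four elements $\{0,\kappa,\tau,\zeta\}$, $\zeta=\kappa+\tau$; for every $e\in E$ one has $e\kappa=e\tau=e$ and $e\zeta=0$. Every $e\in E$ is uniquely $e=u\kappa+v\zeta$ with $u,v\in\mathbb{F}_2$, and $\pi:E\to\mathbb{F}_2$, $\pi(u\kappa+v\zeta)=u$, is extended componentwise to $E^{m}\to\mathbb{F}_2^m$. $\mathbb{F}_2$ acts on $E$ by $0\cdot e=0$, $1\cdot e=e$; for $v\in\mathbb{F}_2^m$ and $e\in E$, $ev=(ev_1,\dots,ev_m)\in E^m$. An $E$-linear code of length $2n$ is a left $E$-submodule $C$ of $E^{2n}$. Its residue code is $C_{Res}=\pi(C)$ and its torsion code is $C_{Tor}=\{v\in\mathbb{F}_2^{2n}: \zeta v\in C\}$ (both binary linear codes). The symplectic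 inner product of $x=(u|v)$, $y=(u'|v')$ (with $u,v,u',v'$ of length $n$, over $E$ or over $\mathbb{F}_2$) is $\langle x,y\rangle_s=\sum_{i=1}^n u_iv'_i+\sum_{i=1}^n v_iu'_i$ (order of factors as written). For a binary linear code $B\subseteq\mathbb{F}_2^{2n}$, $B^{\perp_S}=\{z\in\mathbb{F}_2^{2n}:\langle z,w\rangle_s=0\ \forall w\in B\}$. For an $E$-linear code $C$: $C^{\perp_{S_L}}=\{z\in E^{2n}:\langle z,w\rangle_s=0\ \forall w\in C\}$, $C^{\perp_{S_R}}=\{z\in E^{2n}:\langle w,z\rangle_s=0\ \forall w\in C\}$, $C^{\perp_S}=C^{\perp_{S_L}}\cap C^{\perp_{S_R}}$, and $LSHull(C)=C\cap C^{\perp_{S_L}}$, $RSHull(C)=C\cap C^{\perp_{S_R}}$, $SHull(C)=C\cap C^{\perp_S}$ (these are again $E$-linear codes, so their residue and torsion codes are defined). *)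

From HB Require Import structures.
From mathcomp Require Import all_boot all_algebra.
Set Implicit Arguments. Unset Strict Implicit. Unset Printing Implicit Defensive.
Import GRing.Theory.
Local Open Scope ring_scope.

(* The ring E is modelled by its coordinates: e = u*kappa + v*zeta is (u, v). *)
Definition F2 := 'F_2.
Definition E : finType := (F2 * F2)%type.

Definition Ezero : E := (0, 0).
Definition Eadd (e f : E) : E := (e.1 + f.1, e.2 + f.2).
(* (u kappa + v zeta)(u' kappa + v' zeta) = u u' kappa + v u' zeta,
   using kappa^2 = kappa, kappa zeta = 0, zeta kappa = zeta, zeta^2 = 0. *)
Definition Emul (e f : E) : E := (e.1 * f.1, e.2 * f.1).

Definition kappa : E := (1, 0).
Definition zeta  : E := (0, 1).
Definition tau   : E := Eadd kappa zeta.

Lemma E_relations :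
  (Eadd kappa kappa = Ezero /\ Eadd tau tau = Ezero) /\
  [/\ Emul kappa kappa = kappa, Emul tau tau = tau,
      Emul kappa tau = kappa & Emul tau kappa = tau].
Proof. by do !split; apply/eqP. Qed.

Definition piE (e : E) : F2 := e.1.

Definition F2act (a : F2) (e : E) : E := if a == 0 then Ezero else e.

Definition Evec (n : nat) := {ffun 'I_(n + n) -> E}.
Definition Bvec (n : nat) := {ffun 'I_(n + n) -> F2}.

Definition Evadd n (x y : Evec n) : Evec n := [ffun i => Eadd (x i) (y i)].
Definition Evzero n : Evec n := [ffun=> Ezero].
Definition Evscale n (e : E) (x : Evec n) : Evec n := [ffun i => Emul e (x i)].
Definition piv n (x : Evec n) : Bvec n := [ffun i => piE (x i)].
Definition actv n (e : E) (v : Bvec n) : Evec n := [ffun i => F2act (v i) e].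

Definition is_Ecode n (C : {set Evec n}) : Prop :=
  [/\ Evzero n \in C,
      (forall x y, x \in C -> y \in C -> Evadd x y \in C) &
      (forall e x, x \in C -> Evscale e x \in C)].

Definition Esum (k : nat) (f : 'I_k -> E) : E :=
  foldr Eadd Ezero [seq f i | i <- enum 'I_k].

(* symplectic inner products, x = (u|v), y = (u'|v') *)
Definition sympE n (x y : Evec n) : E :=
  Esum (fun i : 'I_n => Eadd (Emul (x (lshift n i)) (y (rshift n i)))
                             (Emul (x (rshift n i)) (y (lshift n i)))).
Definition sympB n (x y : Bvec n) : F2 :=
  \sum_(i < n) (x (lshift n i) * y (rshift n i) + x (rshift n i) * y (lshift n i)).

Definition Res n (C : {set Evec n}) : {set Bvec n} := [set piv x | x in C].
Definition Tor n (C : {set Evec n}) : {set Bvec n} :=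
  [set v | actv zeta v \in C].

Definition Bperp n (B : {set Bvec n}) : {set Bvec n} :=
  [set z | [forall w in B, sympB z w == 0]].

Definition LperpE n (C : {set Evec n}) : {set Evec n} :=
  [set z | [forall w in C, sympE z w == Ezero]].
Definition RperpE n (C : {set Evec n}) : {set Evec n} :=
  [set z | [forall w in C, sympE w z == Ezero]].
Definition perpE n (C : {set Evec n}) : {set Evec n} := LperpE C :&: RperpE C.

Definition LSHull n (C : {set Evec n}) := C :&: LperpE C.
Definition RSHull n (C : {set Evec n}) := C :&: RperpE C.
Definition SHull n (C : {set Evec n}) := C :&: perpE C.

(* Writing x = a kappa + b zeta coordinatewise, with a, b binary, a code C is
   exactly {a kappa + b zeta | a in C_Res, b in C_Tor}: kappa x and zeta x lie
   in C, which also gives C_Res <= C_Tor. The symplectic product of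
   a kappa + b zeta and a' kappa + b' zeta is <a,a'> kappa + <b,a'> zeta, so
   the left orthogonal of C is {a kappa + b zeta | a, b in (C_Res)^perp} and the
   right one is {a kappa + b zeta | a in (C_Tor)^perp}. Each hull is therefore
   again of the product form A kappa + B zeta with 0 in A and 0 in B, and its
   residue and torsion codes are A and B. *)

From mathcomp Require Import all_boot all_algebra.
Set Implicit Arguments. Unset Strict Implicit. Unset Printing Implicit Defensive.
Import GRing.Theory.
Local Open Scope ring_scope.

Lemma F2_cases (a : F2) : a = 0 \/ a = 1.
Proof. by case: a => [[|[|]] ?] //; [left | right]; apply/val_inj. Qed.

Section Coordinates.

Variable n : nat.
Implicit Types (a b : Bvec n) (x y : Evec n) (S : {set Evec n}) (B : {set Bvec n}).

Definition Evec_of a b : Evec n := [ffun i => (a i, b i)].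
Definition zcoord x : Bvec n := [ffun i => (x i).2].

Lemma Evec_of_coord x : x = Evec_of (piv x) (zcoord x).
Proof. by apply/ffunP => i; rewrite !ffunE; case: (x i). Qed.

Lemma piv_Evec_of a b : piv (Evec_of a b) = a.
Proof. by apply/ffunP => i; rewrite !ffunE. Qed.

Lemma zcoord_Evec_of a b : zcoord (Evec_of a b) = b.
Proof. by apply/ffunP => i; rewrite !ffunE. Qed.

Lemma Evec_of00 : Evec_of 0 0 = Evzero n.
Proof. by apply/ffunP => i; rewrite !ffunE. Qed.

Lemma actv_zeta b : actv zeta b = Evec_of 0 b.
Proof. by apply/ffunP => i; rewrite !ffunE /F2act; case: (F2_cases (b i)) => ->. Qed.

Lemma Evscale_kappa x : Evscale kappa x = Evec_of (piv x) 0.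
Proof. by apply/ffunP => i; rewrite !ffunE /Emul /= mul1r mul0r. Qed.

Lemma Evscale_zeta x : Evscale zeta x = Evec_of 0 (piv x).
Proof. by apply/ffunP => i; rewrite !ffunE /Emul /= mul1r mul0r. Qed.

Lemma Bvec_addvv a : a + a = 0.
Proof. by apply/ffunP => i; rewrite !ffunE; case: (a i) => [[|[|]] ?] //; apply/eqP. Qed.

Lemma Evadd_Evec_of a b a' b' :
  Evadd (Evec_of a b) (Evec_of a' b') = Evec_of (a + a') (b + b').
Proof. by apply/ffunP => i; rewrite !ffunE. Qed.

Lemma Esum_pair k (f : 'I_k -> E) : Esum f = (\sum_i (f i).1, \sum_i (f i).2).
Proof.
rewrite /Esum -!big_enum /=; elim: (enum 'I_k) => [|i s IHs] /=.
  by rewrite !big_nil.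
by rewrite IHs !big_cons.
Qed.

Lemma sympE_coord x y :
  sympE x y = (sympB (piv x) (piv y), sympB (zcoord x) (piv y)).
Proof.
by rewrite /sympE Esum_pair; congr pair; apply: eq_bigr => i _; rewrite !ffunE.
Qed.

Lemma sympBC a b : sympB a b = sympB b a.
Proof. by apply: eq_bigr => i _; rewrite addrC mulrC [_ * b _]mulrC. Qed.

Lemma mem_Bperp0 B : 0 \in Bperp B.
Proof.
rewrite inE; apply/forall_inP => w _.
by rewrite /sympB big1 // => i _; rewrite !ffunE !mul0r addr0.
Qed.

Lemma Bperp_sub B B' : B \subset B' -> Bperp B' \subset Bperp B.
Proof.
move/subsetP => sBB'; apply/subsetP => a; rewrite !inE.
by move/forall_inP => perp_a; apply/forall_inP => w /sBB'; apply: perp_a.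
Qed.

Lemma mem_Res S a : (a \in Res S) = [exists b, Evec_of a b \in S].
Proof.
apply/imsetP/existsP => [[x xS ->] | [b abS]].
  by exists (zcoord x); rewrite -Evec_of_coord.
by exists (Evec_of a b); rewrite ?piv_Evec_of.
Qed.

Lemma mem_Tor S b : (b \in Tor S) = (Evec_of 0 b \in S).
Proof. by rewrite inE actv_zeta. Qed.

Section ProductSet.

Variables (S : {set Evec n}) (A B : {set Bvec n}).
Hypothesis memS : forall a b, (Evec_of a b \in S) = (a \in A) && (b \in B).

Lemma Res_product : 0 \in B -> Res S = A.
Proof.
move=> B0; apply/setP => a; rewrite mem_Res.
apply/existsP/idP => [[b] | aA]; first by rewrite memS => /andP[].
by exists 0; rewrite memS aA.
Qed.

Lemma Tor_product : 0 \in A -> Tor S = B.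
Proof. by move=> A0; apply/setP => b; rewrite mem_Tor memS A0. Qed.

End ProductSet.

Lemma mem_LperpE S a b :
  (Evec_of a b \in LperpE S) = (a \in Bperp (Res S)) && (b \in Bperp (Res S)).
Proof.
rewrite !inE; apply/forall_inP/andP => [perp_ab | [perp_a perp_b] x xS].
  split; apply/forall_inP => _ /imsetP[x xS ->]; have /eqP := perp_ab x xS;
  by rewrite sympE_coord piv_Evec_of zcoord_Evec_of => -[? ?]; apply/eqP.
have xR : piv x \in Res S by apply: imset_f.
move: perp_a perp_b => /forall_inP/(_ _ xR)/eqP perp_a /forall_inP/(_ _ xR)/eqP perp_b.
by rewrite sympE_coord piv_Evec_of zcoord_Evec_of perp_a perp_b.
Qed.

Section Code.

Variable C : {set Evec n}.
Hypothesis codeC : is_Ecode C.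

Lemma Res_sub_Tor : Res C \subset Tor C.
Proof.
case: codeC => _ _ scaleC; apply/subsetP => _ /imsetP[x xC ->].
by rewrite mem_Tor -Evscale_zeta scaleC.
Qed.

Lemma mem_Res_code a : (a \in Res C) = (Evec_of a 0 \in C).
Proof.
case: codeC => _ _ scaleC; rewrite mem_Res.
apply/existsP/idP => [[b abC] | a0C]; last by exists 0.
by have := scaleC kappa _ abC; rewrite Evscale_kappa piv_Evec_of.
Qed.

Lemma mem_code a b : (Evec_of a b \in C) = (a \in Res C) && (b \in Tor C).
Proof.
case: codeC => _ addC _; rewrite mem_Res_code mem_Tor.
apply/idP/andP => [abC | [a0C bC]].
  have a0C : Evec_of a 0 \in C.
    by rewrite -mem_Res_code mem_Res; apply/existsP; exists b.
  by split=> //; have := addC _ _ abC a0C; rewrite Evadd_Evec_of Bvec_addvv addr0.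
by have := addC _ _ a0C bC; rewrite Evadd_Evec_of addr0 add0r.
Qed.

Lemma Tor_code0 : 0 \in Tor C.
Proof. by case: codeC => C0 _ _; rewrite mem_Tor Evec_of00. Qed.

Lemma Res_code0 : 0 \in Res C.
Proof. by case: codeC => C0 _ _; rewrite mem_Res_code Evec_of00. Qed.

Lemma mem_RperpE a b : (Evec_of a b \in RperpE C) = (a \in Bperp (Tor C)).
Proof.
rewrite !inE; apply/forall_inP/forall_inP => [perp_a w wT | perp_a x].
  have : Evec_of 0 w \in C by rewrite mem_code Res_code0.
  move/perp_a/eqP; rewrite sympE_coord !piv_Evec_of zcoord_Evec_of => -[_].
  by rewrite sympBC => ->.
rewrite {1}[x]Evec_of_coord mem_code => /andP[xR xT].
have xT' := subsetP Res_sub_Tor _ xR.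
by rewrite sympE_coord piv_Evec_of sympBC [sympB (zcoord x) _]sympBC
  (eqP (perp_a _ xT)) (eqP (perp_a _ xT')).
Qed.

Lemma mem_LSHull a b : (Evec_of a b \in LSHull C) =
  (a \in Res C :&: Bperp (Res C)) && (b \in Bperp (Res C) :&: Tor C).
Proof.
by rewrite in_setI mem_code mem_LperpE !in_setI andbACA [(b \in Tor C) && _]andbC.
Qed.

Lemma mem_RSHull a b : (Evec_of a b \in RSHull C) =
  (a \in Res C :&: Bperp (Tor C)) && (b \in Tor C).
Proof. by rewrite in_setI mem_code mem_RperpE in_setI andbAC. Qed.

Lemma mem_SHull a b : (Evec_of a b \in SHull C) =
  (a \in Res C :&: Bperp (Tor C)) && (b \in Bperp (Res C) :&: Tor C).
Proof.
rewrite /SHull /perpE setIA -/(LSHull C) in_setI mem_LSHull mem_RperpE !in_setI.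
have /subsetP/(_ a)/implyP := Bperp_sub Res_sub_Tor.
by case: (a \in Bperp (Tor C)) => [/= -> | _]; rewrite ?andbT // !andbF andFb.
Qed.

End Code.

End Coordinates.

Theorem mainTheorem1 (n : nat) (C : {set Evec n}) :
  is_Ecode C ->
  (Res (LSHull C) = Res C :&: Bperp (Res C) /\
   Tor (LSHull C) = Bperp (Res C) :&: Tor C) /\
  (Res (RSHull C) = Res C :&: Bperp (Tor C) /\
   Tor (RSHull C) = Tor C) /\
  (Res (SHull C) = Res C :&: Bperp (Tor C) /\
   Tor (SHull C) = Bperp (Res C) :&: Tor C).
Proof.
move=> codeC.
have R0 := Res_code0 codeC; have T0 := Tor_code0 codeC.
have RRperp0 : 0 \in Res C :&: Bperp (Res C) by rewrite in_setI R0 mem_Bperp0.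
have RTperp0 : 0 \in Res C :&: Bperp (Tor C) by rewrite in_setI R0 mem_Bperp0.
have RperpT0 : 0 \in Bperp (Res C) :&: Tor C by rewrite in_setI T0 mem_Bperp0.
split; [|split]; split.
- exact: Res_product (mem_LSHull codeC) RperpT0.
- exact: Tor_product (mem_LSHull codeC) RRperp0.
- exact: Res_product (mem_RSHull codeC) T0.
- exact: Tor_product (mem_RSHull codeC) RTperp0.
- exact: Res_product (mem_SHull codeC) RperpT0.
- exact: Tor_product (mem_SHull codeC) RTperp0.
Qed.
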